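(* Let $n\ge 3$ and $v\in A_n$. Let $v=v_3\cdots v_n$ be the unique factorization with $v_i\in R_i$ for $3\le i\le n$, and set $\hat\ell(v)=\#\{i\mid v_i\neq e\}$. Then $\hat\ell(v)=\ell_{T(A_n)}(v)$.
   Context: $A_n$ is the alternating group on $\{1,\dots,n\}$, $e$ the identity, and products are compositions of permutations with the rightmost factor applied first; $A_i$ for $i\le n$ is the subgroup fixing $i+1,\dots,n$. $T(A_n)=\{(1\,2)(i\,j)\mid 1\le i<j\le n\}$, and for $v\in A_n$, $\ell_{T(A_n)}(v)=\min\{k\ge 0\mid v=t_1\cdots t_k,\ t_i\in T(A_n)\}$. For $3\le i\le n$, $R_i=\{(1\,2)(k\,i)\mid 1\le k<i\}\cup\{e\}$. Every $v\in A_n$ has a unique factorization $v=v_3\cdots v_n$ with $v_i\in R_i$. *)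

From mathcomp Require Import all_boot fingroup perm alt.
Set Implicit Arguments. Unset Strict Implicit. Unset Printing Implicit Defensive.
Local Open Scope group_scope.

(* Points 1..n of the paper are the ordinals 0..n-1 of 'I_n (point k <-> ordinal k-1). *)

(* Paper product convention: (a . b) applies b first.  MathComp's (b * a) x = a (b x),
   so paper product a . b is MathComp b * a.  pprod [:: t1; ...; tk] = t1 . ... . tk. *)
Definition pprod (T : finType) (s : seq {perm T}) : {perm T} :=
  foldr (fun a acc => acc * a) 1 s.

Definition ttrans (n : nat) (a b i j : 'I_n) : {perm 'I_n} :=
  pprod [:: tperm a b; tperm i j].

Definition TA (n : nat) : {set {perm 'I_n}} :=
  [set s | [exists a : 'I_n, exists b : 'I_n, exists i : 'I_n, exists j : 'I_n,
     [&& (val a == 0)%N, (val b == 1)%N, (i < j)%N & s == ttrans a b i j]]].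

Definition is_lengthT (n : nat) (v : {perm 'I_n}) (k : nat) : Prop :=
  (exists s : seq {perm 'I_n}, all (fun t => t \in TA n) s /\ pprod s = v /\ size s = k)
  /\ (forall s : seq {perm 'I_n}, all (fun t => t \in TA n) s -> pprod s = v -> (k <= size s)%N).

Definition RA (n : nat) (i : 'I_n) : {set {perm 'I_n}} :=
  [set s | (s == 1) || [exists a : 'I_n, exists b : 'I_n, exists k : 'I_n,
     [&& (val a == 0)%N, (val b == 1)%N, (k < i)%N & s == ttrans a b k i]]].

From mathcomp Require Import all_boot fingroup perm alt.
From mathcomp Require Import zify.
Set Implicit Arguments. Unset Strict Implicit. Unset Printing Implicit Defensive.
Local Open Scope group_scope.

(* With c(w) the number of cycles of w, the quantity c(w) + c(w (1 2)) drops
   by at most 2 when w is multiplied by some (1 2)(i j), because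
   w (1 2)(i j) = w (i j)' (1 2) with (i j)' a conjugate transposition and a
   single transposition changes c by at most 1.  Hence any T-factorization of
   v has length at least (c(e) + c((1 2)) - c(v) - c(v (1 2)))/2.  Conversely,
   in v = v_3 ... v_n the prefix v_3 ... v_(i-1) fixes i, so appending a
   nontrivial v_i = (1 2)(k i) lowers both cycle counts by exactly 1 (the
   fixed point i merges into the cycle of k).  So the number of nontrivial
   factors attains the bound. *)

Section CycleCount.
Variable T : finType.
Implicit Types (s u w : {perm T}) (i j k x y : T).

Definition ncycles s := #|porbits s|.

Lemma ncycles_tperm_mul s x y :
  ncycles (tperm x y * s) + (x \notin porbit s y).*2 = ncycles s + (x != y).
Proof. exact: porbits_mul_tperm. Qed.

Lemma ncycles_mul_tperm s x y :
  ncycles (s * tperm x y) + (x \notin porbit s y).*2 = ncycles s + (x != y).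
Proof.
have := ncycles_tperm_mul s^-1 x y; rewrite porbitV /ncycles porbitsV.
by rewrite -(porbitsV (s * _)) invMg tpermV.
Qed.

Lemma ncycles_tperm_mulC s x y : ncycles (tperm x y * s) = ncycles (s * tperm x y).
Proof.
by apply/eqP; rewrite -(eqn_add2r (x \notin porbit s y).*2) ncycles_tperm_mul
  ncycles_mul_tperm.
Qed.

Lemma ncycles_mul_tperm_ge s x y : ncycles s <= (ncycles (s * tperm x y)).+1.
Proof.
have [->|/negPf nxy] := eqVneq x y; first by rewrite tperm1 mulg1.
have := ncycles_mul_tperm s x y; rewrite nxy -mul2n; lia.
Qed.

Lemma ncycles_tperm_mul_fix s x y :
  s y = y -> x != y -> ncycles s = (ncycles (tperm x y * s)).+1.
Proof.
move=> sy /negPf nxy; have := ncycles_tperm_mul s x y; rewrite nxy.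
suff -> : x \notin porbit s y by rewrite addn2 addn1 => -[].
by apply/porbitP => -[m xE]; move: nxy; rewrite xE permX_fix // eqxx.
Qed.

Variables a b : T.

Definition cycle_weight s := ncycles s + ncycles (s * tperm a b).

Lemma cycle_weight_mul_ge w i j :
  cycle_weight w <= cycle_weight (w * (tperm i j * tperm a b)) + 2.
Proof.
have conj_tperm : tperm i j * tperm a b = tperm a b * tperm (tperm a b i) (tperm a b j).
  by rewrite -tpermJ conjgE tpermV mulgA tperm2 mul1g.
rewrite /cycle_weight -(mulgA _ _ (tperm a b)) -(mulgA (tperm i j)) tperm2 mulg1.
rewrite conj_tperm mulgA.
have := ncycles_mul_tperm_ge w i j.
have := ncycles_mul_tperm_ge (w * tperm a b) (tperm a b i) (tperm a b j).
move=> h1 h2; apply: leq_trans (leq_add h2 h1) _.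
by rewrite addSn addnS addn2 addnC.
Qed.

Lemma cycle_weight_tperm_mul_fix u k i :
  u i = i -> k != i -> a != i -> b != i ->
  cycle_weight (tperm k i * tperm a b * u) + 2 = cycle_weight u.
Proof.
move=> ui ki ai bi; have ab_fix : tperm a b i = i by rewrite tpermD.
have fix_ab_u : ncycles (u * tperm a b) = (ncycles (tperm k i * (tperm a b * u))).+1.
  by rewrite -ncycles_tperm_mulC (ncycles_tperm_mul_fix _ ki) // permM ab_fix ui.
have fix_u : ncycles u = (ncycles (tperm k i * (tperm a b * (u * tperm a b)))).+1.
  rewrite -(ncycles_tperm_mul_fix _ ki); last by rewrite !permM ab_fix ui ab_fix.
  by rewrite ncycles_tperm_mulC -mulgA tperm2 mulg1.
by rewrite /cycle_weight fix_u fix_ab_u -!mulgA addn2 [RHS]addnC addSn addnS.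
Qed.

Lemma cycle_weight_pprod_ge (s : seq {perm T}) :
  {in s, forall t, exists i j, t = tperm i j * tperm a b} ->
  cycle_weight 1 <= cycle_weight (pprod s) + 2 * size s.
Proof.
elim: s => [|t s IHs] sT; first by rewrite addn0.
have [i [j ->]] := sT t (mem_head t s).
have /IHs : {in s, forall u, exists i j, u = tperm i j * tperm a b}.
  by move=> u us; apply: sT; rewrite inE us orbT.
move=> /leq_trans; apply.
by rewrite [size _]/= mulnS addnA leq_add2r; apply: cycle_weight_mul_ge.
Qed.

End CycleCount.

Lemma pprod_rcons (T : finType) (s : seq {perm T}) x : pprod (rcons s x) = x * pprod s.
Proof.
rewrite /pprod foldr_rcons mul1g.
by elim: s => [|y s IHs] /=; rewrite ?mulg1 // IHs mulgA.
Qed.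

Lemma pprod_filter_neq1 (T : finType) (s : seq {perm T}) :
  pprod [seq t <- s | t != 1] = pprod s.
Proof.
elim: s => //= t s IHs; have [-> | _] := eqVneq t 1; last by rewrite /= IHs.
by rewrite /= mulg1 IHs.
Qed.

Lemma pprod_fix (T : finType) (s : seq {perm T}) (z : T) :
  {in s, forall t : {perm T}, t z = z} -> pprod s z = z.
Proof.
elim: s => [|t s IHs] sz; first by rewrite perm1.
by rewrite /= permM IHs ?sz ?mem_head // => u us; rewrite sz // inE us orbT.
Qed.

Lemma ttransE n (a b i j : 'I_n) : ttrans a b i j = tperm i j * tperm a b.
Proof. by rewrite /ttrans /pprod /= mul1g. Qed.

Lemma RA_sub_TA n (i : 'I_n) x : x \in RA i -> x != 1 -> x \in TA n.
Proof.
rewrite !inE => /orP[/eqP -> | RAx]; first by rewrite eqxx.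
move: RAx => /existsP[a /existsP[b /existsP[k /and4P[a0 b1 ki /eqP ->]]]] _.
by apply/existsP; exists a; apply/existsP; exists b; apply/existsP; exists k;
  apply/existsP; exists i; rewrite a0 b1 ki eqxx.
Qed.

Section AlternatingFactorization.
Variable n : nat.
Hypothesis n_ge3 : (3 <= n)%N.

Let p0 : 'I_n := Ordinal (leq_trans (isT : 0 < 3)%N n_ge3).
Let p1 : 'I_n := Ordinal (leq_trans (isT : 1 < 3)%N n_ge3).

Lemma ord0_eq (a : 'I_n) : val a = 0%N -> a = p0.
Proof. by move=> aE; apply: val_inj. Qed.

Lemma ord1_eq (a : 'I_n) : val a = 1%N -> a = p1.
Proof. by move=> aE; apply: val_inj. Qed.

Lemma tperm01_fix (z : 'I_n) : (2 <= val z)%N -> tperm p0 p1 z = z.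
Proof. by move=> z2; apply: tpermD; apply/eqP => pz; rewrite -pz in z2. Qed.

Lemma TA_elim t : t \in TA n -> exists i j, t = tperm i j * tperm p0 p1.
Proof.
rewrite inE => /existsP[a /existsP[b /existsP[i /existsP[j]]]].
move=> /and4P[/eqP a0 /eqP b1 _ /eqP ->].
by exists i, j; rewrite ttransE (ord0_eq a0) (ord1_eq b1).
Qed.

Lemma RA_elim (i : 'I_n) x : x \in RA i ->
  x = 1 \/ exists2 k : 'I_n, (k < i)%N & x = tperm k i * tperm p0 p1.
Proof.
rewrite inE => /orP[/eqP -> | ]; first by left.
move=> /existsP[a /existsP[b /existsP[k /and4P[/eqP a0 /eqP b1 ki /eqP ->]]]].
by right; exists k; rewrite // ttransE (ord0_eq a0) (ord1_eq b1).
Qed.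

Lemma RA_fix (i j : 'I_n) x : x \in RA j -> (j < i)%N -> (2 <= val i)%N -> x i = i.
Proof.
move=> /RA_elim[-> | [k kj ->]] ji i2; first by rewrite perm1.
rewrite permM [tperm k j i]tpermD ?tperm01_fix //; apply/eqP => iE.
  by rewrite iE in kj; rewrite ltnNge ltnW in ji.
by rewrite iE ltnn in ji.
Qed.

Lemma cycle_weight_factorization (f : 'I_n -> {perm 'I_n}) (l : seq 'I_n) :
  (forall i : 'I_n, (2 <= val i)%N -> f i \in RA i) ->
  pairwise (fun i j : 'I_n => val i < val j)%N l ->
  all (fun i : 'I_n => 2 <= val i)%N l ->
  cycle_weight p0 p1 (pprod (map f l)) + 2 * count (fun i => f i != 1) l
  = cycle_weight p0 p1 1.
Proof.
move=> fRA; elim/last_ind: l => [|l i IHl]; first by rewrite addn0.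
rewrite pairwise_rcons all_rcons => /andP[/allP l_lt_i l_inc] /andP[i2 l2].
rewrite -(IHl l_inc l2) map_rcons pprod_rcons -cats1 count_cat /= addn0 mulnDr addnA.
have fix_i : pprod (map f l) i = i.
  apply: pprod_fix => _ /mapP[j jl ->].
  exact: RA_fix (fRA j (allP l2 j jl)) (l_lt_i j jl) i2.
have [-> | [k ki ->]] := RA_elim (fRA i i2); first by rewrite mul1g eqxx addn0.
have ab_i : p0 != i /\ p1 != i.
  by split; apply/eqP => iE; rewrite -iE in i2.
have k_i : k != i by apply/eqP => kE; rewrite kE ltnn in ki.
have w_eq := cycle_weight_tperm_mul_fix fix_i k_i ab_i.1 ab_i.2.
suff -> : tperm k i * tperm p0 p1 != 1 by rewrite muln1 addnAC w_eq.
apply: contra_eqN (cycle_weight_tperm_mul_fix (perm1 i) k_i ab_i.1 ab_i.2) => /eqP ->.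
by rewrite mulg1 -{2}(addn0 (cycle_weight _ _ 1)) eqn_add2l.
Qed.

End AlternatingFactorization.

Theorem theorem4p6 (n : nat) (hn : (3 <= n)%N) (v : {perm 'I_n})
  (hv : v \in 'Alt_('I_n))
  (f : 'I_n -> {perm 'I_n})
  (hf : forall i : 'I_n, (2 <= val i)%N -> f i \in RA i)
  (hfact : v = pprod [seq f i | i <- enum 'I_n & (2 <= val i)%N]) :
  is_lengthT v #|[set i : 'I_n | (2 <= val i)%N & f i != 1]|.
Proof.
(* [hv] is redundant: it follows from [hfact]. *)
set l := [seq i <- enum 'I_n | (2 <= val i)%N].
have l_inc : pairwise (fun i j : 'I_n => val i < val j)%N l.
  apply: pairwise_filter; rewrite -(pairwise_map val ltn) val_enum_ord.
  by rewrite -sorted_pairwise ?iota_ltn_sorted //; apply: ltn_trans.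
have card_l : #|[set i : 'I_n | (2 <= val i)%N & f i != 1]| = count (fun i => f i != 1) l.
  rewrite count_filter cardsE cardE /enum_mem size_filter count_filter.
  by apply: eq_count => i /=; rewrite !inE unfold_in /= andbC andbT.
have weight_v := cycle_weight_factorization hn hf l_inc (filter_all _ _).
rewrite -hfact in weight_v; rewrite card_l; split.
  exists [seq t <- map f l | t != 1]; split; last split.
  - apply/allP => t; rewrite mem_filter => /andP[t1 /mapP[i]].
    rewrite mem_filter => /andP[i2 _] tE; rewrite tE in t1 *.
    exact: RA_sub_TA (hf i i2) t1.
  - by rewrite pprod_filter_neq1 hfact.
  - by rewrite size_filter count_map.
move=> s sT sv; have := cycle_weight_pprod_ge (fun t ts => TA_elim hn (allP sT t ts)).
by rewrite sv -weight_v leq_add2l leq_pmul2l.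
Qed.
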